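(* Let $F:\mathbb{R}^n\to\mathbb{R}^m$ be continuously differentiable around $\bar x$, let $g:\mathbb{R}^m\to\mathbb{R}\cup\{\infty\}$ be lower semicontinuous and convex with $\bar y:=F(\bar x)\in\operatorname{dom}g$, and let $\bar y^*\in\partial g(\bar y)$. Assume the second-order qualification condition (SOQC) holds at $\bar x$ for $\bar y^*$, i.e., for every $L\in\mathcal{S}(\partial g)(\bar y,\bar y^* )$, $\nabla F(\bar x)^Tv^*=0$ and $(0,v^* )\in L$ imply $v^*=0$. Then there is a neighborhood $\mathcal{V}\subset\mathbb{R}^n\times\mathbb{R}^m\times\mathbb{R}^m$ of $(\bar x,\bar y^*,0)$ such that for all $(\tilde x,\tilde y^*,b)\in\mathcal{V}$ with $\tilde y^*\in\partial g(F(\tilde x)+b)$ one has: for every $L\in\mathcal{S}(\partial g)(F(\tilde x)+b,\tilde y^* )$, $\nabla F(\tilde x)^Tv^*=0$ and $(0,v^* )\in L$ imply $v^*=0$; i.e., SOQC holds for $g\circ F_b$ at $\tilde x$ for $\tilde y^*$, where $F_b(x):=F(x)+b$.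
   Context: $\partial g$ is the convex subdifferential. Tangent cone: $T_\Omega(\bar z)=\operatorname{Limsup}_{t\downarrow0}(\Omega-\bar z)/t$. SC derivative: let $\mathcal{Z}_m$ be the set of $m$-dimensional linear subspaces of $\mathbb{R}^m\times\mathbb{R}^m$ with metric $d(L_1,L_2)=\|P_{L_1}-P_{L_2}\|$ ($P_L$ orthogonal projection onto $L$); let $\mathcal{O}$ be the set of $(y,y^* )\in\operatorname{gph}\partial g$ at which $T_{\operatorname{gph}\partial g}(y,y^* )$ is an $m$-dimensional subspace. Then $\mathcal{S}(\partial g)(y,y^* )$ is the set of $L\in\mathcal{Z}_m$ for which there exist $(y_k,y_k^* )\in\mathcal{O}$, $(y_k,y_k^* )\to(y,y^* )$, with $d(T_{\operatorname{gph}\partial g}(y_k,y_k^* ),L)\to0$. *)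

(* Vectors of R^k are row vectors 'rV[R]_k;
   R^m x R^m is identified with 'rV[R]_(m+m) via row_mx y y*. *)
From HB Require Import structures.
From mathcomp Require Import all_boot all_order all_algebra.
From mathcomp Require Import all_classical all_reals.
From mathcomp Require Import topology normedtype sequences derive.
Set Implicit Arguments. Unset Strict Implicit. Unset Printing Implicit Defensive.
Import Order.TTheory GRing.Theory Num.Theory.
Import numFieldNormedType.Exports.
Local Open Scope classical_set_scope.
Local Open Scope ring_scope.

Section Defs.
Variable R : realType.

Definition dotv (p : nat) (u v : 'rV[R]_p) : R := \sum_(i < p) u ord0 i * v ord0 i.
Definition enorm (p : nat) (v : 'rV[R]_p) : R := Num.sqrt (dotv v v).

Definition opnorm (p : nat) (A : 'M[R]_p) : R :=
  sup [set enorm (v *m A) | v in [set v : 'rV[R]_p | enorm v <= 1]].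

Definition is_subspace_dim (p k : nat) (L : set 'rV[R]_p) : Prop :=
  exists B : 'M[R]_(k, p), \rank B = k /\ L = [set v | (v <= B)%MS].

Definition is_orth_proj (p : nat) (L : set 'rV[R]_p) (P : 'M[R]_p) : Prop :=
  forall v, L (v *m P) /\ (forall u, L u -> dotv (v - v *m P) u = 0).

Definition proj_mx (p : nat) (L : set 'rV[R]_p) : 'M[R]_p :=
  xget 0 [set P | is_orth_proj L P].

Definition sub_dist (p : nat) (L1 L2 : set 'rV[R]_p) : R :=
  opnorm (proj_mx L1 - proj_mx L2).

Definition tangent_cone (p : nat) (Om : set 'rV[R]_p) (z : 'rV[R]_p) : set 'rV[R]_p :=
  [set w | exists (t : nat -> R) (w_ : nat -> 'rV[R]_p),
     (forall k, 0 < t k) /\ t @ \oo --> 0 /\ w_ @ \oo --> w /\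
     (forall k, Om (z + t k *: w_ k))].

Definition subdiff (m : nat) (g : 'rV[R]_m -> \bar R) (y : 'rV[R]_m) : set 'rV[R]_m :=
  [set ys | g y \is a fin_num /\
     forall z, (g y + (dotv ys (z - y))%:E <= g z)%E].

Definition gph_subdiff (m : nat) (g : 'rV[R]_m -> \bar R) : set 'rV[R]_(m + m) :=
  [set z | exists y ys, subdiff g y ys /\ z = row_mx y ys].

Definition O_set (m : nat) (g : 'rV[R]_m -> \bar R) (y ys : 'rV[R]_m) : Prop :=
  subdiff g y ys /\
  is_subspace_dim m (tangent_cone (gph_subdiff g) (row_mx y ys)).

Definition SCderiv (m : nat) (g : 'rV[R]_m -> \bar R) (y ys : 'rV[R]_m)
    (L : set 'rV[R]_(m + m)) : Prop :=
  is_subspace_dim m L /\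
  exists (y_ ys_ : nat -> 'rV[R]_m),
    (forall k, O_set g (y_ k) (ys_ k)) /\
    y_ @ \oo --> y /\ ys_ @ \oo --> ys /\
    (fun k => sub_dist (tangent_cone (gph_subdiff g) (row_mx (y_ k) (ys_ k))) L)
      @ \oo --> (0 : R).

(* Second-order qualification condition, with J = the Jacobian in mathcomp's
   row convention (h *m J = 'd F x h), i.e. J = (nabla F(x))^T.
   nabla F(x)^T v* = 0 reads  v* *m J^T = 0. *)
Definition SOQC (n m : nat) (g : 'rV[R]_m -> \bar R) (J : 'M[R]_(n, m))
    (y ys : 'rV[R]_m) : Prop :=
  forall L, SCderiv g y ys L ->
    forall vs : 'rV[R]_m, vs *m J^T = 0 -> L (row_mx 0 vs) -> vs = 0.

Definition convex_ext (m : nat) (g : 'rV[R]_m -> \bar R) : Prop :=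
  forall (x y : 'rV[R]_m) (l : R), 0 < l < 1 ->
    (g (l *: x + (1 - l) *: y)%R <= l%:E * g x + (1 - l)%:E * g y)%E.

Definition C1_around (n m : nat) (F : 'rV[R]_n -> 'rV[R]_m) (x : 'rV[R]_n) : Prop :=
  exists2 U, nbhs x U &
    (forall z, U z -> differentiable F z) /\
    (forall z, U z -> {for z, continuous (fun u => 'J F u)}).

End Defs.

(* If SOQC failed at points (x_k, ys_k, b_k) tending to (xbar, ybs, 0), there would be
   L_k in S(dg)(F x_k + b_k, ys_k) and unit vectors v_k with J(x_k)^T v_k = 0 and
   (0, v_k) in L_k.  Replace L_k by the tangent space T_k of gph dg at a nearby point of O
   and pass to a subsequence (projection matrices and unit vectors range over a compact
   set): the projections onto T_k converge to a symmetric idempotent P.  Ranks of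
   idempotents are locally constant, so P projects onto an m-dimensional L, which therefore
   belongs to S(dg)(F xbar, ybs).  In the limit (0, v) lies in L, J(xbar)^T v = 0 and
   |v| = 1, contradicting SOQC at xbar. *)

From Pilot Require Import Defs.
From HB Require Import structures.
From mathcomp Require Import all_boot all_order all_algebra.
From mathcomp Require Import all_classical all_reals.
From mathcomp Require Import topology normedtype sequences derive.
From mathcomp Require Import ring lra interval_inference.
Import Order.TTheory GRing.Theory Num.Theory.
Import numFieldNormedType.Exports.
Local Open Scope classical_set_scope.
Local Open Scope ring_scope.
Set Implicit Arguments. Unset Strict Implicit. Unset Printing Implicit Defensive.

Local Notation tangent_proj g Y YS :=
  (Defs.proj_mx (tangent_cone (gph_subdiff g) (row_mx Y YS))).

Section euclidean_norm.
Variable R : realType.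
Implicit Types (p q : nat).

Lemma dotvE p (u v : 'rV[R]_p) : dotv u v = (u *m v^T) 0 0.
Proof. by rewrite /dotv !mxE; apply: eq_bigr => i _; rewrite mxE. Qed.

Lemma dotvC p (u v : 'rV[R]_p) : dotv u v = dotv v u.
Proof. by apply: eq_bigr => i _; rewrite mulrC. Qed.

Lemma dotvBl p (u w v : 'rV[R]_p) : dotv (u - w) v = dotv u v - dotv w v.
Proof. by rewrite /dotv -sumrB; apply: eq_bigr => i _; rewrite !mxE mulrBl. Qed.

Lemma dotv_ge0 p (v : 'rV[R]_p) : 0 <= dotv v v.
Proof. by apply: sumr_ge0 => i _; rewrite -expr2 sqr_ge0. Qed.

Lemma dotv_eq0 p (v : 'rV[R]_p) : dotv v v = 0 -> v = 0.
Proof.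
move/psumr_eq0P => v0; apply/rowP => i; rewrite mxE.
apply/eqP; rewrite -[_ == 0]orbb -mulf_eq0; apply/eqP/v0 => // j _.
by rewrite -expr2 sqr_ge0.
Qed.

Lemma enorm_ge0 p (v : 'rV[R]_p) : 0 <= enorm v.
Proof. exact: sqrtr_ge0. Qed.

Lemma enorm_sqr p (v : 'rV[R]_p) : enorm v ^+ 2 = dotv v v.
Proof. by rewrite sqr_sqrtr ?dotv_ge0. Qed.

Lemma enorm_eq0 p (v : 'rV[R]_p) : enorm v = 0 -> v = 0.
Proof.
by move/eqP; rewrite sqrtr_eq0 => v0; apply/dotv_eq0/eqP; rewrite eq_le v0 dotv_ge0.
Qed.

Lemma enorm0 p : enorm (0 : 'rV[R]_p) = 0.
Proof. by rewrite /enorm /dotv big1 ?sqrtr0 // => i _; rewrite mxE mul0r. Qed.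

Lemma enormZ p c (v : 'rV[R]_p) : enorm (c *: v) = `|c| * enorm v.
Proof.
rewrite /enorm /dotv -sqrtr_sqr -sqrtrM ?sqr_ge0 // mulr_sumr.
by congr Num.sqrt; apply: eq_bigr => i _; rewrite !mxE; ring.
Qed.

Lemma enorm_row0 p (v : 'rV[R]_p) : enorm (row_mx (0 : 'rV[R]_p) v) = enorm v.
Proof.
rewrite /enorm /dotv big_split_ord /= big1 ?add0r => [|i _]; last first.
  by rewrite row_mxEl mxE mul0r.
by congr Num.sqrt; apply: eq_bigr => i _; rewrite row_mxEr.
Qed.

Lemma abs_le_enorm p (v : 'rV[R]_p) i : `|v 0 i| <= enorm v.
Proof.
rewrite -sqrtr_sqr ler_sqrt ?dotv_ge0 // /dotv (bigD1 i) //= expr2 lerDl.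
by apply: sumr_ge0 => j _; rewrite -expr2 sqr_ge0.
Qed.

Lemma mxnorm_le_enorm p (v : 'rV[R]_p) : `|v| <= enorm v.
Proof.
rewrite -[`|v|]/(mx_norm v) mx_normrE.
apply: bigmax_le => [|[i j] _]; first exact: enorm_ge0.
by rewrite (ord1 i); exact: abs_le_enorm.
Qed.

Lemma enorm_le_sum p (v : 'rV[R]_p) : enorm v <= \sum_i `|v 0 i|.
Proof.
suff [sq_le b0] : dotv v v <= (\sum_i `|v 0 i|) ^+ 2 /\ 0 <= \sum_i `|v 0 i|.
  by rewrite -[X in _ <= X]ger0_norm // -sqrtr_sqr ler_sqrt ?sqr_ge0.
rewrite /dotv; elim/big_rec2: _ => [|i a b _ [ab b0]]; first by rewrite expr0n.
split; last by rewrite addr_ge0.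
have := normr_ge0 (v 0 i).
by rewrite -[v 0 i * v 0 i]expr2 -[v 0 i ^+ 2]real_normK ?num_real //; nra.
Qed.

End euclidean_norm.

Section operator_norm.
Variable R : realType.
Implicit Types (p q : nat).

Lemma mxentry_le_norm p q (A : 'M[R]_(p, q)) i j : `|A i j| <= `|A|.
Proof. by rewrite -[`|A|]/(mx_norm A) mx_normrE (le_bigmax _ _ (i, j)). Qed.

Lemma enorm_mulmx_le p q (u : 'rV[R]_p) (A : 'M[R]_(p, q)) :
  enorm (u *m A) <= (q * p)%:R * (enorm u * `|A|).
Proof.
apply: le_trans (enorm_le_sum _) _.
apply: le_trans (_ : _ <= \sum_(j < q) \sum_(i < p) enorm u * `|A|) _.
  apply: ler_sum => j _; rewrite mxE; apply: le_trans (ler_norm_sum _ _ _) _.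
  apply: ler_sum => i _.
  by rewrite normrM ler_pM ?normr_ge0 ?abs_le_enorm ?mxentry_le_norm.
by rewrite sumr_const card_ord sumr_const card_ord -mulrnA mulr_natl mulnC.
Qed.

Lemma opnorm_has_sup p (A : 'M[R]_p) :
  has_sup [set enorm (v *m A) | v in [set v : 'rV[R]_p | enorm v <= 1]].
Proof.
split; first by exists (enorm (0 *m A)), 0 => //=; rewrite enorm0 ler01.
exists ((p * p)%:R * `|A|) => _ [u /= u1 <-].
by apply: le_trans (enorm_mulmx_le u A) _; rewrite ler_wpM2l // ler_piMl // enorm_ge0.
Qed.

Lemma opnorm_ub p (A : 'M[R]_p) v : enorm v <= 1 -> enorm (v *m A) <= opnorm A.
Proof. by move=> v1; apply: sup_upper_bound; [exact: opnorm_has_sup | exists v]. Qed.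

Lemma opnorm_ge0 p (A : 'M[R]_p) : 0 <= opnorm A.
Proof. by have := @opnorm_ub p A 0; rewrite mul0mx enorm0; apply; exact: ler01. Qed.

Lemma opnorm_le_mxnorm p (A : 'M[R]_p) : opnorm A <= (p * p)%:R * `|A|.
Proof.
apply: ge_sup; first by case: (opnorm_has_sup A).
move=> _ [u /= u1 <-]; apply: le_trans (enorm_mulmx_le u A) _.
by rewrite ler_wpM2l // ler_piMl // enorm_ge0.
Qed.

Lemma enorm_mulmx_opnorm p (u : 'rV[R]_p) (A : 'M[R]_p) :
  enorm (u *m A) <= enorm u * opnorm A.
Proof.
have [->|u0] := eqVneq u 0; first by rewrite mul0mx enorm0 mul0r.
have eu0 : 0 < enorm u.
  by rewrite lt0r enorm_ge0 andbT; apply: contra_neq u0; exact: enorm_eq0.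
rewrite -ler_pdivrMl // -[X in X * _]ger0_norm ?invr_ge0 ?enorm_ge0 // -enormZ scalemxAl.
by apply: opnorm_ub; rewrite enormZ ger0_norm ?invr_ge0 ?enorm_ge0 // mulVf ?gt_eqF.
Qed.

End operator_norm.

Section matrix_convergence.
Context {R : realType} {T : Type} {F : set_system T} {FF : Filter F}.

Lemma cvg_mxP p q (M : T -> 'M[R]_(p, q)) (A : 'M[R]_(p, q)) :
  M @ F --> A <-> forall i j, (fun t => M t i j) @ F --> A i j.
Proof.
split=> [MA i j | MA]; first exact: cvg_comp MA (@coord_continuous _ _ _ i j A).
apply/cvgrPdist_lt => e e0.
have : \forall t \near F, forall i j, `|A i j - M t i j| < e.
  by apply: filter_forall => i; apply: filter_forall => j; exact: cvgr_dist_lt.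
apply: filterS => t MAt; rewrite -[`|_|]/(mx_norm _) mx_normrE.
by apply: bigmax_lt => // -[i j] _; rewrite !mxE.
Qed.

Lemma cvg_mulmx p q r (A : T -> 'M[R]_(p, q)) (B : T -> 'M[R]_(q, r))
    (A0 : 'M[R]_(p, q)) (B0 : 'M[R]_(q, r)) :
  A @ F --> A0 -> B @ F --> B0 -> (fun t => A t *m B t) @ F --> A0 *m B0.
Proof.
move=> /cvg_mxP A_A0 /cvg_mxP B_B0; apply/cvg_mxP => i j; rewrite mxE.
under eq_fun do rewrite mxE.
by apply: cvg_big => [|l _]; [exact: add_continuous | exact: cvgM].
Qed.

Lemma cvg_trmx p q (A : T -> 'M[R]_(p, q)) (A0 : 'M[R]_(p, q)) :
  A @ F --> A0 -> (fun t => (A t)^T) @ F --> A0^T.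
Proof.
move=> /cvg_mxP A_A0; apply/cvg_mxP => i j; rewrite mxE.
by under eq_fun do rewrite mxE; exact: A_A0.
Qed.

Lemma cvg_dotv p (u v : T -> 'rV[R]_p) (u0 v0 : 'rV[R]_p) :
  u @ F --> u0 -> v @ F --> v0 -> (fun t => dotv (u t) (v t)) @ F --> dotv u0 v0.
Proof.
move=> u_u0 v_v0; rewrite dotvE; under eq_fun do rewrite dotvE.
by move/cvg_mxP : (cvg_mulmx u_u0 (cvg_trmx v_v0)); apply.
Qed.

Lemma cvg_lsubmx p q r (A : T -> 'M[R]_(p, q + r)) (A0 : 'M[R]_(p, q + r)) :
  A @ F --> A0 -> (fun t => lsubmx (A t)) @ F --> lsubmx A0.
Proof.
move=> /cvg_mxP A_A0; apply/cvg_mxP => i j; rewrite mxE.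
by under eq_fun do rewrite mxE; exact: A_A0.
Qed.

Lemma cvg_rsubmx p q r (A : T -> 'M[R]_(p, q + r)) (A0 : 'M[R]_(p, q + r)) :
  A @ F --> A0 -> (fun t => rsubmx (A t)) @ F --> rsubmx A0.
Proof.
move=> /cvg_mxP A_A0; apply/cvg_mxP => i j; rewrite mxE.
by under eq_fun do rewrite mxE; exact: A_A0.
Qed.

Lemma cvg_vec_mx p q (u : T -> 'rV[R]_(p * q)) (u0 : 'rV[R]_(p * q)) :
  u @ F --> u0 -> (fun t => vec_mx (u t)) @ F --> vec_mx u0.
Proof.
move=> /cvg_mxP u_u0; apply/cvg_mxP => i j; rewrite mxE.
by under eq_fun do rewrite mxE; exact: u_u0.
Qed.

Lemma cvg_row_mx p q r (A : T -> 'M[R]_(p, q)) (B : T -> 'M[R]_(p, r))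
    (A0 : 'M[R]_(p, q)) (B0 : 'M[R]_(p, r)) :
  A @ F --> A0 -> B @ F --> B0 -> (fun t => row_mx (A t) (B t)) @ F --> row_mx A0 B0.
Proof.
move=> /cvg_mxP A_A0 /cvg_mxP B_B0; apply/cvg_mxP => i j.
rewrite -(fintype.splitK j); case: (fintype.split j) => l /=.
  by rewrite row_mxEl; under eq_fun do rewrite row_mxEl; exact: A_A0.
by rewrite row_mxEr; under eq_fun do rewrite row_mxEr; exact: B_B0.
Qed.

End matrix_convergence.

Section sequences_in_metric_spaces.
Context {R : realType} {T : pseudoMetricType R}.

Lemma cvg_ball_shrink (a x : nat -> T) (l : T) :
  a @ \oo --> l -> (forall k, ball (a k) k.+1%:R^-1 (x k)) -> x @ \oo --> l.
Proof.
move=> a_l ax; apply/cvg_ballP => e e0; near=> k.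
rewrite [e]splitr; apply: (@ball_triangle _ _ (a k)); last apply: le_ball (ax k).
  by near: k; apply: (cvg_ball a_l); rewrite divr_gt0.
near: k; near do apply: ltW.
exact: (near_infty_natSinv_lt (PosNum (divr_gt0 e0 (ltr0Sn _ 1)))).
Unshelve. all: end_near. Qed.

Lemma compact_cvg_subseq (K : set T) (u : nat -> T) :
  compact K -> (forall k, K (u k)) ->
  exists phi : nat -> nat, exists2 c : T, phi @ \oo --> \oo & u \o phi @ \oo --> c.
Proof.
move=> Kc Ku; have [c [_ u_c]] : K `&` cluster (u @ \oo) !=set0.
  by apply: Kc; exists 0%N => // k _; exact: Ku.
have near_c j : exists k, (j <= k)%N /\ ball c j.+1%:R^-1 (u k).
  have [||x [[k jk <-] cuk]] :=
    u_c [set u k | k in [set k | (j <= k)%N]] (ball c j.+1%:R^-1).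
  - by exists j => // k; exists k.
  - by apply: nbhsx_ballx; rewrite invr_gt0 ltr0n.
  by exists k.
have /choice [phi phiP] := near_c; exists phi, c.
  move=> A [N _ NA]; exists N => // j /= Nj; apply: NA.
  exact: leq_trans Nj (phiP j).1.
by apply: cvg_ball_shrink (cvg_cst c) _ => j; exact: (phiP j).2.
Qed.

End sequences_in_metric_spaces.

Section orthogonal_projections.
Variable R : realType.
Implicit Types (p k : nat).

Definition row_space p (A : 'M[R]_p) : set 'rV[R]_p := [set v | (v <= A)%MS].

Lemma is_subspace_dim_row_space p k (A : 'M[R]_p) :
  \rank A = k -> is_subspace_dim k (row_space A).
Proof.
move=> <-; exists (row_base A); rewrite eq_row_base; split=> //.
by apply/predeqP => v; rewrite /row_space /= eq_row_base.
Qed.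

Lemma subspaceB p k (L : set 'rV[R]_p) u w :
  is_subspace_dim k L -> L u -> L w -> L (u - w).
Proof. by move=> [B [_ ->]] /= Bu Bw; rewrite addmx_sub // eqmx_opp. Qed.

Lemma orth_proj_fix p k (L : set 'rV[R]_p) P u :
  is_subspace_dim k L -> is_orth_proj L P -> L u -> u *m P = u.
Proof.
move=> Lk LP Lu; have [LuP uP_orth] := LP u.
have /dotv_eq0/eqP : dotv (u - u *m P) (u - u *m P) = 0.
  by apply: uP_orth; exact: subspaceB Lk Lu LuP.
by rewrite subr_eq0 => /eqP.
Qed.

Lemma mulmx_vec_inj p (P Q : 'M[R]_p) : (forall v : 'rV_p, v *m P = v *m Q) -> P = Q.
Proof. by move=> PQ; apply/row_matrixP => i; rewrite !rowE PQ. Qed.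

Lemma orth_proj_uniq p k (L : set 'rV[R]_p) P Q :
  is_subspace_dim k L -> is_orth_proj L P -> is_orth_proj L Q -> P = Q.
Proof.
move=> Lk LP LQ; apply: mulmx_vec_inj => v.
have [LvP vP_orth] := LP v; have [LvQ vQ_orth] := LQ v.
have LPQ := subspaceB Lk LvP LvQ.
have /dotv_eq0/eqP : dotv (v *m P - v *m Q) (v *m P - v *m Q) = 0.
  have E : v *m P - v *m Q = (v - v *m Q) - (v - v *m P).
    by rewrite [RHS]addrC opprB addrA subrK.
  by rewrite {1}E dotvBl vP_orth // vQ_orth // subrr.
by rewrite subr_eq0 => /eqP.
Qed.

Lemma orth_proj_idem p k (L : set 'rV[R]_p) P :
  is_subspace_dim k L -> is_orth_proj L P -> P *m P = P.
Proof.
move=> Lk LP; apply: mulmx_vec_inj => v.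
by rewrite mulmxA (orth_proj_fix Lk LP) //; case: (LP v).
Qed.

Lemma orth_proj_sym p k (L : set 'rV[R]_p) P :
  is_subspace_dim k L -> is_orth_proj L P -> P^T = P.
Proof.
move=> Lk LP.
have P_dot i j : P j i = dotv (delta_mx 0 i *m P) (delta_mx 0 j *m P).
  have [Lj _] := LP (delta_mx 0 j); have [_ /(_ _ Lj)] := LP (delta_mx 0 i).
  rewrite dotvBl => /eqP; rewrite subr_eq0 => /eqP <-.
  by rewrite dotvE -rowE mxE mxE -rowE mxE.
by apply/matrixP => i j; rewrite mxE P_dot (P_dot j i) dotvC.
Qed.

Lemma orth_proj_exists p k (L : set 'rV[R]_p) :
  is_subspace_dim k L -> exists P, is_orth_proj L P.
Proof.
move=> [B [rB ->]]; have fB : row_free B by rewrite /row_free rB.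
have G_unit : B *m B^T \in unitmx.
  rewrite -row_free_unit -kermx_eq0; apply/rowV0P => w /sub_kermxP wG0.
  have /dotv_eq0/eqP : dotv (w *m B) (w *m B) = 0.
    by rewrite dotvE trmx_mul mulmxA -(mulmxA w) wG0 mul0mx mxE.
  by rewrite mulmx_free_eq0 // => /eqP.
exists (B^T *m invmx (B *m B^T) *m B) => v; split=> [|_ /submxP [x ->]].
  by rewrite /= mulmxA submxMl.
rewrite dotvE trmx_mul mulmxA mulmxBl -!mulmxA (mulmxA B B^T) (mulmxA (invmx _)).
by rewrite mulVmx // mul1mx subrr mxE.
Qed.

Lemma proj_mxP p k (L : set 'rV[R]_p) :
  is_subspace_dim k L -> is_orth_proj L (Defs.proj_mx L).
Proof. by move=> Lk; apply: xgetPex; exact: orth_proj_exists Lk. Qed.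

Lemma mxrank_orth_proj p k (L : set 'rV[R]_p) P :
  is_subspace_dim k L -> is_orth_proj L P -> \rank P = k.
Proof.
move=> Lk LP; have [B [rB EL]] := Lk; rewrite -rB; apply/eqP; rewrite eqn_leq.
apply/andP; split; apply: mxrankS; apply/row_subP => i.
  by rewrite rowE; have [+ _] := LP (delta_mx 0 i); rewrite EL.
have Li : L (row i B) by rewrite EL /= row_sub.
by rewrite -(orth_proj_fix Lk LP Li) submxMl.
Qed.

Lemma orth_proj_row_space p (P : 'M[R]_p) :
  P^T = P -> P *m P = P -> is_orth_proj (row_space P) P.
Proof.
move=> Psym Pidem v; split=> [|_ /submxP [x ->]]; first exact: submxMl.
by rewrite dotvE trmx_mul Psym mulmxA mulmxBl -(mulmxA v) Pidem subrr mul0mx mxE.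
Qed.

Lemma sym_idem_entry_le1 p (P : 'M[R]_p) i j :
  P^T = P -> P *m P = P -> `|P i j| <= 1.
Proof.
move=> Psym Pidem.
have Pii : P i i = \sum_l P i l ^+ 2.
  by rewrite -{1}Pidem mxE; apply: eq_bigr => l _; rewrite expr2 -{2}Psym mxE.
have sq_le l : P i l ^+ 2 <= P i i.
  by rewrite Pii (bigD1 l) //= lerDl sumr_ge0 // => l' _; rewrite sqr_ge0.
have Pii_le1 : P i i <= 1.
  by have := sq_le i; have := le_trans (sqr_ge0 _) (sq_le i); rewrite expr2; nra.
rewrite -(ler_pXn2r (n := 2)) ?nnegrE ?normr_ge0 // expr1n real_normK ?num_real //.
exact: le_trans (sq_le j) Pii_le1.
Qed.

(* If u = u P and u Q = 0 then |u| = |u (P - Q)| < |u| unless u = 0: multiplication by Q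
   is injective on the range of P. *)
Lemma mxrank_idem_le p (P Q : 'M[R]_p) :
  P *m P = P -> opnorm (P - Q) < 1 -> (\rank P <= \rank Q)%N.
Proof.
move=> Pidem PQ1; pose B := row_base P.
suff fBQ : row_free (B *m Q).
  by move: fBQ; rewrite /row_free => /eqP <-; exact: mxrankM_maxr.
rewrite -kermx_eq0; apply/rowV0P => w /sub_kermxP wBQ0; pose u := w *m B.
have uP : u *m P = u.
  have /submxP [x ->] : (u <= P)%MS by rewrite -(eq_row_base P) submxMl.
  by rewrite -mulmxA Pidem.
have uQ : u *m Q = 0 by rewrite -mulmxA.
have u_le : enorm u <= enorm u * opnorm (P - Q).
  by rewrite -{1}uP -[u *m P]subr0 -uQ -mulmxBr enorm_mulmx_opnorm.
have : enorm u = 0 by have := enorm_ge0 u; have := opnorm_ge0 (P - Q); nra.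
by move/enorm_eq0/eqP; rewrite mulmx_free_eq0 ?row_base_free // => /eqP.
Qed.

End orthogonal_projections.

Section limits_of_projections.
Variables (R : realType) (p : nat).

Lemma cvg_opnorm0 (A : nat -> 'M[R]_p) :
  A @ \oo --> (0 : 'M[R]_p) -> (fun k => opnorm (A k)) @ \oo --> 0.
Proof.
move=> A0; apply: (@squeeze_cvgr _ _ _ _ (fun=> 0) (fun k => (p * p)%:R * `|A k|)).
- by near=> k; rewrite opnorm_ge0 opnorm_le_mxnorm.
- exact: cvg_cst.
- rewrite -(mulr0 ((p * p)%:R : R)); apply: cvgM; first exact: cvg_cst.
  by rewrite -(@normr0 _ 'M[R]_p); exact: cvg_norm.
Unshelve. all: end_near. Qed.

Lemma cvg_proj_mx_row_space r (L_ : nat -> set 'rV[R]_p) (P : 'M[R]_p) :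
  (forall k, is_subspace_dim r (L_ k)) -> (fun k => Defs.proj_mx (L_ k)) @ \oo --> P ->
  is_subspace_dim r (row_space P) /\
  (fun k => sub_dist (L_ k) (row_space P)) @ \oo --> 0.
Proof.
move=> Lr P_P; pose P_ k := Defs.proj_mx (L_ k).
have P_orth k : is_orth_proj (L_ k) (P_ k) := proj_mxP (Lr k).
have Psym : P^T = P.
  have P_sym : (fun k => (P_ k)^T) = P_.
    by apply: funext => k; exact: orth_proj_sym (Lr k) (P_orth k).
  apply: (cvg_unique _ (cvg_trmx P_P)); first exact: norm_hausdorff.
  by rewrite /= P_sym.
have Pidem : P *m P = P.
  have P_idem : (fun k => P_ k *m P_ k) = P_.
    by apply: funext => k; exact: orth_proj_idem (Lr k) (P_orth k).
  apply: (cvg_unique _ (cvg_mulmx P_P P_P)); first exact: norm_hausdorff.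
  by rewrite /= P_idem.
have PkP : (fun k => opnorm (P_ k - P)) @ \oo --> 0 by apply/cvg_opnorm0/subr_cvg0.
have PPk : (fun k => opnorm (P - P_ k)) @ \oo --> 0.
  apply: cvg_opnorm0; rewrite -oppr0; under eq_fun do rewrite -opprB.
  by apply: cvgN; apply/subr_cvg0.
have [k [Pk1 Pk2]] : exists k, opnorm (P_ k - P) < 1 /\ opnorm (P - P_ k) < 1.
  near \oo => k; exists k; split; near: k.
    exact: cvgr_lt PkP _ ltr01.
  exact: cvgr_lt PPk _ ltr01.
have rP : \rank P = r.
  rewrite -(mxrank_orth_proj (Lr k) (P_orth k)); apply/eqP; rewrite eqn_leq.
  by rewrite mxrank_idem_le // mxrank_idem_le // (orth_proj_idem (Lr k) (P_orth k)).
have Psub := is_subspace_dim_row_space rP; split=> //.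
rewrite /sub_dist (orth_proj_uniq Psub (proj_mxP Psub) (orth_proj_row_space Psym Pidem)).
exact: PkP.
Unshelve. all: end_near. Qed.

Lemma cvg_subseq_proj_mx_unit q r (L_ : nat -> set 'rV[R]_p) (v_ : nat -> 'rV[R]_q) :
  (forall k, is_subspace_dim r (L_ k)) -> (forall k, enorm (v_ k) = 1) ->
  exists phi : nat -> nat, exists (P : 'M[R]_p) (v : 'rV[R]_q),
    [/\ phi @ \oo --> \oo, (fun k => Defs.proj_mx (L_ (phi k))) @ \oo --> P
       & v_ \o phi @ \oo --> v].
Proof.
move=> Lr v1; pose D k := row_mx (mxvec (Defs.proj_mx (L_ k))) (v_ k).
pose K := [set w : 'rV[R]_(p * p + q) | forall i, `[-1, 1]%classic (w 0 i)].
have Kc : compact K.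
  by apply: (@rV_compact R _ (fun=> `[-1, 1]%classic)) => _; exact: segment_compact.
have KD k : K (D k).
  move=> i; rewrite /= in_itv /= -ler_norml /D -(fintype.splitK i).
  case: (fintype.split i) => a /=; last by rewrite row_mxEr -(v1 k) abs_le_enorm.
  rewrite row_mxEl; case/mxvec_indexP: a => a b; rewrite mxvecE.
  have P_orth := proj_mxP (Lr k).
  by rewrite sym_idem_entry_le1 ?(orth_proj_sym (Lr k)) ?(orth_proj_idem (Lr k)).
have [phi [c phi_oo Dc]] := compact_cvg_subseq Kc KD.
exists phi, (vec_mx (lsubmx c)), (rsubmx c); split=> //.
  have -> : (fun k => Defs.proj_mx (L_ (phi k))) =
      fun k => vec_mx (lsubmx (D (phi k))).
    by apply: funext => k; rewrite row_mxKl mxvecK.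
  exact: cvg_vec_mx (cvg_lsubmx Dc).
have -> : v_ \o phi = fun k => rsubmx (D (phi k)).
  by apply: funext => k; rewrite row_mxKr.
exact: cvg_rsubmx Dc.
Qed.

End limits_of_projections.

Section SC_derivative.
Variables (R : realType) (m : nat) (g : 'rV[R]_m -> \bar R).

Lemma SCderiv_of_cvg (Y YS : nat -> 'rV[R]_m) (y ys : 'rV[R]_m)
    (P : 'M[R]_(m + m)) :
  (forall k, O_set g (Y k) (YS k)) -> Y @ \oo --> y -> YS @ \oo --> ys ->
  (fun k => tangent_proj g (Y k) (YS k)) @ \oo --> P -> SCderiv g y ys (row_space P).
Proof.
move=> O_Y Y_y YS_ys P_P.
have [Pm dist0] := cvg_proj_mx_row_space (fun k => (O_Y k).2) P_P.
by split=> //; exists Y, YS.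
Qed.

Lemma SCderiv_approx (y ys v : 'rV[R]_m) L e :
  SCderiv g y ys L -> L (row_mx 0 v) -> enorm v = 1 -> 0 < e ->
  exists Y YS, [/\ O_set g Y YS, ball y e Y, ball ys e YS &
    `|row_mx 0 v *m tangent_proj g Y YS - row_mx 0 v| < e].
Proof.
move=> [Lm [y_ [ys_ [O_y [y_y [ys_ys dist0]]]]]] Lv v1 e0.
have [k [[yk ysk] distk]] : exists k, (ball y e (y_ k) /\ ball ys e (ys_ k)) /\
    sub_dist (tangent_cone (gph_subdiff g) (row_mx (y_ k) (ys_ k))) L < e.
  near \oo => k; exists k; split; [split|]; near: k.
  - exact: cvg_ball y_y _ e0.
  - exact: cvg_ball ys_ys _ e0.
  - exact: cvgr_lt dist0 _ e0.
exists (y_ k), (ys_ k); split=> //.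
(* w is fixed by the projection onto L, so |w P_T - w| = |w (P_T - P_L)| <= d(T, L). *)
set w := row_mx 0 v.
have wQ : w *m Defs.proj_mx L = w := orth_proj_fix Lm (proj_mxP Lm) Lv.
apply: le_lt_trans (mxnorm_le_enorm _) _.
rewrite -{2}wQ -mulmxBr; apply: le_lt_trans (enorm_mulmx_opnorm _ _) _.
by rewrite enorm_row0 v1 mul1r.
Unshelve. all: end_near. Qed.

Lemma not_SOQC_unit n (J : 'M[R]_(n, m)) (y ys : 'rV[R]_m) : ~ SOQC g J y ys ->
  exists L (v : 'rV[R]_m),
    [/\ SCderiv g y ys L, v *m J^T = 0, L (row_mx 0 v) & enorm v = 1].
Proof.
move=> /existsNP [L /not_implyP [SCL]].
move=> /existsNP [v /not_implyP [vJ /not_implyP [Lv v0]]].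
have ev0 : enorm v != 0 by apply: contra_not_neq v0; exact: enorm_eq0.
exists L, ((enorm v)^-1 *: v); split=> //.
- by rewrite -scalemxAl vJ scaler0.
- have [B [_ EL]] := SCL.1; rewrite EL /= in Lv *.
  by rewrite -[X in row_mx X _](scaler0 _ (enorm v)^-1) -scale_row_mx scalemx_sub.
- by rewrite enormZ ger0_norm ?invr_ge0 ?enorm_ge0 // mulVf.
Qed.

Lemma not_SOQC_of_cvg n (J_ : nat -> 'M[R]_(n, m)) (J : 'M[R]_(n, m))
    (Y YS v_ : nat -> 'rV[R]_m) (y ys : 'rV[R]_m) :
  (forall k, O_set g (Y k) (YS k)) -> Y @ \oo --> y -> YS @ \oo --> ys ->
  J_ @ \oo --> J -> (forall k, v_ k *m (J_ k)^T = 0) -> (forall k, enorm (v_ k) = 1) ->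
  (fun k => row_mx 0 (v_ k) *m tangent_proj g (Y k) (YS k) - row_mx 0 (v_ k))
    @ \oo --> (0 : 'rV_(m + m)) ->
  ~ SOQC g J y ys.
Proof.
move=> O_Y Y_y YS_ys J_J vJ v1 w_fix soqc.
have [phi [P [v [phi_oo P_P v_v]]]] := cvg_subseq_proj_mx_unit (fun k => (O_Y k).2) v1.
have SC := SCderiv_of_cvg (fun k => O_Y (phi k)) (cvg_comp _ _ phi_oo Y_y)
  (cvg_comp _ _ phi_oo YS_ys) P_P.
have w_w : (fun k => row_mx (0 : 'rV_m) ((v_ \o phi) k)) @ \oo --> row_mx 0 v.
  exact: cvg_row_mx (cvg_cst _) v_v.
have Lv : row_space P (row_mx 0 v).
  suff <- : row_mx 0 v *m P = row_mx 0 v by exact: submxMl.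
  apply/eqP; rewrite -subr_eq0; apply/eqP.
  apply: (cvg_unique _ (cvgB (cvg_mulmx w_w P_P) w_w)); first exact: norm_hausdorff.
  exact: cvg_comp _ _ phi_oo w_fix.
have vJ0 : v *m J^T = 0.
  apply: (cvg_unique _ (cvg_mulmx v_v (cvg_trmx (cvg_comp _ _ phi_oo J_J)))).
    exact: norm_hausdorff.
  have -> : (fun k => (v_ \o phi) k *m ((J_ \o phi) k)^T) = fun=> 0.
    by apply: funext => k; exact: vJ.
  exact: cvg_cst.
have vv1 : dotv v v = 1.
  apply: (cvg_unique _ (cvg_dotv v_v v_v)); first exact: Rhausdorff.
  have -> : (fun k => dotv ((v_ \o phi) k) ((v_ \o phi) k)) = fun=> 1.
    by apply: funext => k; rewrite /= -enorm_sqr v1 expr1n.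
  exact: cvg_cst.
move: vv1; rewrite (soqc _ SC v vJ0 Lv) -enorm_sqr enorm0 expr0n => /esym/eqP.
by rewrite oner_eq0.
Qed.

End SC_derivative.

Section SOQC_stability.
Variables (R : realType) (n m : nat).
Variables (F : 'rV[R]_n -> 'rV[R]_m) (g : 'rV[R]_m -> \bar R).
Variables (xbar : 'rV[R]_n) (ybs : 'rV[R]_m).
Hypothesis F_cont : {for xbar, continuous F}.

Lemma SOQC_failure_seq :
  ~ (exists2 V : set ('rV[R]_n * ('rV[R]_m * 'rV[R]_m)),
      nbhs (xbar, (ybs, (0 : 'rV_m))) V &
      forall xt yts b, V (xt, (yts, b)) ->
        subdiff g (F xt + b) yts -> SOQC g ('J F xt) (F xt + b) yts) ->
  exists (x_ : nat -> 'rV[R]_n) (Y YS v_ : nat -> 'rV[R]_m),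
    [/\ x_ @ \oo --> xbar, forall k, O_set g (Y k) (YS k),
        Y @ \oo --> F xbar, YS @ \oo --> ybs &
     [/\ forall k, v_ k *m ('J F (x_ k))^T = 0, forall k, enorm (v_ k) = 1 &
        (fun k => row_mx 0 (v_ k) *m tangent_proj g (Y k) (YS k) - row_mx 0 (v_ k))
          @ \oo --> (0 : 'rV_(m + m))]].
Proof.
move=> not_near; have e_gt0 k : 0 < k.+1%:R^-1 :> R by rewrite invr_gt0.
have fail k : exists x yts b, ball (xbar, (ybs, 0)) k.+1%:R^-1 (x, (yts, b)) /\
    ~ SOQC g ('J F x) (F x + b) yts.
  apply: contrapT => good; apply: not_near.
  exists (ball (xbar, (ybs, 0)) k.+1%:R^-1); first exact: nbhsx_ballx.
  by move=> x yts b xB _; apply: contrapT => bad; apply: good; exists x, yts, b.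
have approx k : exists x b yts Y YS v,
    [/\ ball (xbar, (ybs, 0)) k.+1%:R^-1 (x, (yts, b)), O_set g Y YS,
        ball (F x + b) k.+1%:R^-1 Y, ball yts k.+1%:R^-1 YS &
     [/\ v *m ('J F x)^T = 0, enorm v = 1 &
        ball 0 k.+1%:R^-1 (row_mx 0 v *m tangent_proj g Y YS - row_mx 0 v)]].
  have [x [yts [b [xB /not_SOQC_unit [L [v [SCL vJ Lv v1]]]]]]] := fail k.
  have [Y [YS [O_Y YB YSB wB]]] := SCderiv_approx SCL Lv v1 (e_gt0 k).
  exists x, b, yts, Y, YS, v; split=> //; split=> //.
  by rewrite -ball_normE /= sub0r normrN.
have /choice [x_ /choice [b_ /choice [yts_ H]]] := approx.
have /choice [Y /choice [YS /choice [v_ {}H]]] := H.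
have x_x : x_ @ \oo --> xbar.
  by apply: cvg_ball_shrink (cvg_cst _) _ => k; have [[]] := H k.
have yts_y : yts_ @ \oo --> ybs.
  by apply: cvg_ball_shrink (cvg_cst _) _ => k; have [[_ []]] := H k.
have b_0 : b_ @ \oo --> 0.
  by apply: cvg_ball_shrink (cvg_cst _) _ => k; have [[_ []]] := H k.
exists x_, Y, YS, v_; split=> [//|k|||]; first by have [] := H k.
- rewrite -[F xbar]addr0.
  apply: cvg_ball_shrink (cvgD (cvg_comp _ _ x_x F_cont) b_0) _ => k.
  by have [] := H k.
- by apply: cvg_ball_shrink yts_y _ => k; have [] := H k.
split=> [k|k|]; try by have [_ _ _ _ []] := H k.
by apply: cvg_ball_shrink (cvg_cst _) _ => k; have [_ _ _ _ []] := H k.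
Qed.

End SOQC_stability.

Theorem proposition3p5 (R : realType) (n m : nat)
    (F : 'rV[R]_n -> 'rV[R]_m) (g : 'rV[R]_m -> \bar R)
    (xbar : 'rV[R]_n) (ybs : 'rV[R]_m) :
  C1_around F xbar ->
  (forall y, g y != -oo%E) ->
  lower_semicontinuous g ->
  convex_ext g ->
  (g (F xbar) < +oo)%E ->
  subdiff g (F xbar) ybs ->
  SOQC g ('J F xbar) (F xbar) ybs ->
  exists2 V : set ('rV[R]_n * ('rV[R]_m * 'rV[R]_m)),
    nbhs (xbar, (ybs, (0 : 'rV[R]_m))) V &
    forall (xt : 'rV[R]_n) (yts b : 'rV[R]_m),
      V (xt, (yts, b)) ->
      subdiff g (F xt + b) yts ->
      SOQC g ('J F xt) (F xt + b) yts.
Proof.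
move=> [U Ux [F_diff J_cont]] _ _ _ _ _ soqc.
have F_cont := differentiable_continuous (F_diff _ (nbhs_singleton Ux)).
apply: contrapT => /(SOQC_failure_seq F_cont).
move=> [x_ [Y [YS [v_ [x_x O_Y Y_y YS_ys [vJ v1 w0]]]]]].
apply: (not_SOQC_of_cvg O_Y Y_y YS_ys _ vJ v1 w0 soqc).
exact: cvg_comp _ _ x_x (J_cont _ (nbhs_singleton Ux)).
Qed.
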